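(* Let $d\in\mathrm{End}^1(E)$ and $\delta\in\mathrm{End}^{-1}(E)$ with $d^2=\delta^2=0$, and assume $[d,\delta]=d\delta+\delta d$ is invertible, so that $d$ and $\delta$ are exact. Then $$\prod_{i=p}^q\det\big([d,\delta]|_{E^i}\big)^{(-1)^i}=1 ,$$ and the ratio of the nonzero elements $\tau(d),\tau(\delta)$ of the even line $\det E$ is $$\tau(d)\otimes\tau(\delta)^{-1}=\prod_{i=p}^q\det\big([d,\delta]|_{E^i}\big)^{(-1)^i\,i} .$$ In particular, if $[d,\delta]=1$ then $\tau(d)=\tau(\delta)$.
   Context: $E=\bigoplus_{i=p}^qE^i$ is a finite-dimensional complex $\mathbb Z$-graded vector space. Determinant lines follow Knudsen–Mumford: $\det V=\Lambda^{\max}V$ with parity $\dim V$, and $\det E=\bigotimes_{i=p}^q(\det E^i)^{(-1)^i}$ (ordered). When a differential is exact, $\det E$ is even. For an exact degree-$1$ differential $d$, $$\tau(d)=\bigotimes_{i=p}^q(d\sigma^{i-1}\wedge\sigma^i)^{(-1)^i},$$ with $\sigma^i$ a nonzero element of $\Lambda^{\max}$ of a complement of $dE^{i-1}$ in $E^i$ ($\sigma^{p-1}=1$). For an exact degree-$(-1)$ differential $\delta$, $$\tau(\delta)=\bigotimes_{i=p}^q(\rho^i\wedge\delta\rho^{i+1})^{(-1)^i},$$ with $\rho^i$ a nonzero element of $\Lambda^{\max}$ of a complement of $\delta E^{i+1}$ in $E^i$ ($\rho^{q+1}=1$). For odd $i$, inverses of wedge products $a\wedge b$ are read as $a^{-1}_{\mathrm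 r}\wedge b^{-1}_{\mathrm l}$ (right, respectively left, graded inverses). Both sections are nonzero and independent of choices. *)

From HB Require Import structures.
From mathcomp Require Import all_boot all_order all_algebra.
From mathcomp Require Import complex Rstruct.
Import ComplexField.
Set Implicit Arguments. Unset Strict Implicit. Unset Printing Implicit Defensive.
Import Order.TTheory GRing.Theory Num.Theory.
Local Open Scope ring_scope.

Definition C : Type := (Rdefinitions.R)[i].

(* The graded space E = \oplus_{i=p}^{q} E^i is encoded by
   k := i - p in {0..N}, N = q - p; E^k = C^(n k) (row vectors), with
   n k = 0 for k > N.  A degree-1 map d is a family d k : E^k -> E^{k+1},
   acting on row vectors by v |-> v *m d k; a degree-(-1) map delta is a
   family delta k : E^{k+1} -> E^k. *)

Section Defs.
Variable n : nat -> nat.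
Variable d : forall k, 'M[C]_(n k, n k.+1).
Variable delta : forall k, 'M[C]_(n k.+1, n k).

Definition bracket (k : nat) : 'M[C]_(n k) :=
  match k return 'M[C]_(n k) with
  | 0 => d 0 *m delta 0
  | k'.+1 => d k'.+1 *m delta k'.+1 + delta k' *m d k'
  end.

Definition sqdet a b (A : 'M[C]_(a, b)) : C :=
  if a =P b is ReflectT e then \det (castmx (e, erefl b) A) else 0.

Definition imd (k : nat) : 'M[C]_(n k) :=
  match k return 'M[C]_(n k) with
  | 0 => 0
  | k'.+1 => (<< d k' >>)%MS
  end.

Definition imdelta (k : nat) : 'M[C]_(n k) := (<< delta k >>)%MS.

Definition compl_basis (k m : nat) (A : 'M[C]_(m, n k)) (S : 'M[C]_(n k)) :=
  [/\ row_free A, (A :&: S <= (0 : 'M[C]_(n k)))%MS & (1%:M <= A + S)%MS].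

(* sigma^k = wedge of the rows of c k; the factor d sigma^{k-1} /\ sigma^k,
   expressed as a scalar w.r.t. the standard volume element of E^k *)
Definition tau_d_factor (m : nat -> nat) (c : forall k, 'M[C]_(m k, n k))
  (k : nat) : C :=
  match k with
  | 0 => sqdet (c 0)
  | k'.+1 => sqdet (col_mx (c k' *m d k') (c k'.+1))
  end.

(* rho^k = wedge of the rows of r k; factor rho^k /\ delta rho^{k+1} *)
Definition tau_delta_factor (m : nat -> nat) (r : forall k, 'M[C]_(m k, n k))
  (k : nat) : C :=
  sqdet (col_mx (r k) (r k.+1 *m delta k)).

Definition sgnz (i : int) : int := (-1) ^ i.

(* tau(d), tau(delta) as scalars in det E trivialized by the standard bases *)
Definition tau_d (p : int) (N : nat) (m : nat -> nat)
  (c : forall k, 'M[C]_(m k, n k)) : C :=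
  \prod_(k < N.+1) tau_d_factor c k ^ sgnz (p + k%:Z).

Definition tau_delta (p : int) (N : nat) (m : nat -> nat)
  (r : forall k, 'M[C]_(m k, n k)) : C :=
  \prod_(k < N.+1) tau_delta_factor r k ^ sgnz (p + k%:Z).

End Defs.

(* Since [d, delta] is invertible, E^k = dE^{k-1} + delta E^{k+1}, both summands are
   [d, delta]-stable, and d maps delta E^{k+1} onto dE^k intertwining [d, delta].  So
   det [d, delta]|E^k = rho_k rho_{k+1}, with rho_k the determinant on dE^{k-1}, and
   the alternating product telescopes to 1.  For the torsions, let beta_k and alpha_k
   be the coordinate determinants of sigma^k and rho^k in a basis adapted to the
   splitting; then beta_k alpha_{k+1} rho_{k+1} = 1, so the k-th factor of
   tau(d)/tau(delta) is (alpha_k alpha_{k+1} rho_{k+1})^-1.  Under the alternating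
   signs the alphas telescope away, while the weighted product of the determinants
   telescopes to the same product of the rho_{k+1}^((-1)^(p+k+1)). *)

From mathcomp Require Import all_boot all_order all_algebra.
From mathcomp Require Import complex Rstruct.
Import ComplexField.
Import GRing.Theory.
Local Open Scope ring_scope.
Set Implicit Arguments. Unset Strict Implicit.

Lemma sqdetE n (A : 'M[C]_n) : sqdet A = \det A.
Proof. by rewrite /sqdet; case: eqP => // e; rewrite castmx_id. Qed.

Lemma sqdet_nonsquare a b (A : 'M[C]_(a, b)) : a <> b -> sqdet A = 0.
Proof. by rewrite /sqdet; case: eqP. Qed.

Lemma sqdet_neq0_square a b (A : 'M[C]_(a, b)) : sqdet A != 0 -> a = b.
Proof. by rewrite /sqdet; case: eqP => // _; rewrite eqxx. Qed.

Lemma sqdet_empty a b (A : 'M[C]_(a, b)) : a = 0%N -> b = 0%N -> sqdet A = 1.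
Proof. by move=> ea eb; subst a b; rewrite sqdetE det_mx00. Qed.

Lemma sqdet_mulmx r s c (M : 'M[C]_(r, s)) (X : 'M[C]_(s, c)) :
  r = s \/ s = c -> sqdet (M *m X) = sqdet M * sqdet X.
Proof.
move=> square; case: (r =P s) => [rs | rs]; case: (s =P c) => [sc | sc].
- by subst r c; rewrite !sqdetE det_mulmx.
- by subst r; rewrite !(sqdet_nonsquare _ sc) mulr0.
- by subst c; rewrite !(sqdet_nonsquare _ rs) mul0r.
- by case: square.
Qed.

Lemma sqdet_lblock a m b (A : 'M[C]_a) (B : 'M[C]_(m, a)) (D : 'M[C]_(m, b)) :
  sqdet (block_mx A 0 B D) = \det A * sqdet D.
Proof.
case: (m =P b) => [mb | mb]; first by subst m; rewrite !sqdetE det_lblock.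
by rewrite !sqdet_nonsquare ?mulr0 // => /addnI.
Qed.

Lemma sqdet_ublock m b a (A : 'M[C]_(m, b)) (B : 'M[C]_(m, a)) (D : 'M[C]_a) :
  sqdet (block_mx A B 0 D) = sqdet A * \det D.
Proof.
case: (m =P b) => [mb | mb]; first by subst m; rewrite !sqdetE det_ublock.
by rewrite !sqdet_nonsquare ?mul0r // => /addIn.
Qed.

Lemma sqdet_col_mx0 m n (X : 'M[C]_(0, n)) (Y : 'M[C]_(m, n)) :
  sqdet (col_mx X Y) = sqdet Y.
Proof.
congr sqdet; apply/matrixP=> i j; rewrite mxE; case: splitP => [[] // | k hk].
by congr (Y _ j); apply: val_inj.
Qed.

Section ChangeOfBasis.
Variables (a b m n : nat) (S1 : 'M[C]_(a, n)) (S2 : 'M[C]_(b, n)).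
Hypothesis hS : sqdet (col_mx S1 S2) != 0.

Lemma sqdet_col_mx_dcoord (U : 'M[C]_(m, a)) (B : 'M[C]_(m, b)) :
  sqdet (col_mx S1 (U *m S1 + B *m S2)) = sqdet B * sqdet (col_mx S1 S2).
Proof.
have -> : col_mx S1 (U *m S1 + B *m S2) = block_mx 1%:M 0 U B *m col_mx S1 S2.
  by rewrite mul_block_col mul1mx mul0mx addr0.
by rewrite sqdet_mulmx ?sqdet_lblock ?det1 ?mul1r // (sqdet_neq0_square hS); right.
Qed.

Lemma sqdet_col_mx_ucoord (A : 'M[C]_(m, a)) (V : 'M[C]_(m, b)) :
  sqdet (col_mx (A *m S1 + V *m S2) S2) = sqdet A * sqdet (col_mx S1 S2).
Proof.
have -> : col_mx (A *m S1 + V *m S2) S2 = block_mx A V 0 1%:M *m col_mx S1 S2.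
  by rewrite mul_block_col mul1mx mul0mx add0r.
by rewrite sqdet_mulmx ?sqdet_ublock ?det1 ?mulr1 // (sqdet_neq0_square hS); right.
Qed.

End ChangeOfBasis.

Lemma sqdet_col_mx_neq0 a b n (S1 : 'M[C]_(a, n)) (S2 : 'M[C]_(b, n)) :
  row_free S1 -> row_free S2 -> (S1 :&: S2 <= (0 : 'M_n))%MS ->
  (1%:M <= S1 + S2)%MS -> sqdet (col_mx S1 S2) != 0.
Proof.
move=> free1 free2 cap0 full.
have rank_sum : \rank (S1 + S2) = (a + b)%N.
  rewrite mxrank_disjoint_sum; last by apply/eqP; rewrite -submx0.
  by rewrite (eqP free1) (eqP free2).
have ab_n : n = (a + b)%N by rewrite -rank_sum; apply/esym/eqP; rewrite -[_ == _]sub1mx.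
subst n; rewrite sqdetE -unitfE -unitmxE -row_full_unit /row_full.
by rewrite -(addsmxE S1 S2) rank_sum.
Qed.

Lemma det_block_triangular a m n (S1 : 'M[C]_(a, n)) (S2 : 'M[C]_(m, n))
  (L : 'M[C]_n) (P1 : 'M[C]_a) (P2 : 'M[C]_m) (G : 'M[C]_(m, a)) :
  sqdet (col_mx S1 S2) != 0 ->
  S1 *m L = P1 *m S1 -> S2 *m L = G *m S1 + P2 *m S2 ->
  \det L = \det P1 * \det P2.
Proof.
move=> hS h1 h2; apply: (mulIf hS).
rewrite -sqdetE mulrC -sqdet_mulmx; last by right.
rewrite -(sqdetE P2) -(sqdet_lblock _ G) -(sqdet_mulmx (block_mx _ _ _ _)); last by left.
by rewrite mul_col_mx h1 h2 mul_block_col mul0mx addr0.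
Qed.

Lemma compl_mulmx_basis m a x b (c : 'M[C]_(m, a)) (X : 'M[C]_(x, a)) (Y : 'M[C]_(a, b)) :
  row_free c -> (c :&: X <= (0 : 'M_a))%MS -> (1%:M <= c + X)%MS ->
  X *m Y = 0 -> (forall s (v : 'M[C]_(s, a)), v *m Y = 0 -> (v <= X)%MS) ->
  row_free (c *m Y) /\ (Y <= c *m Y)%MS.
Proof.
move=> free_c cap0 full XY0 kerY; split.
  apply: inj_row_free => v; rewrite mulmxA => /kerY vcX.
  have : (v *m c <= (0 : 'M_a))%MS by apply: submx_trans cap0; rewrite sub_capmx vcX submxMl.
  by rewrite submx0 => /eqP vc0; apply: (row_free_inj free_c); rewrite vc0 mul0mx.
case/sub_addsmxP: full => [[u1 u2] /= split1]; apply/submxP; exists u1.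
by rewrite -{1}(mul1mx Y) split1 mulmxDl -(mulmxA u2) XY0 mulmx0 addr0 mulmxA.
Qed.

Lemma coord_addsmx t a b n (M : 'M[C]_(t, n)) (S1 : 'M[C]_(a, n)) (S2 : 'M[C]_(b, n)) :
  (1%:M <= S1 + S2)%MS -> exists X Y, M = X *m S1 + Y *m S2.
Proof.
move=> full; have : (M <= S1 + S2)%MS by apply: submx_trans full; exact: submx1.
by case/sub_addsmxP => [[X Y] /= eM]; exists X, Y.
Qed.

Lemma compl_exists (n : nat -> nat) k (S : 'M[C]_(n k)) :
  compl_basis (row_base (S^C)%MS) S.
Proof.
split; first exact: row_base_free.
  rewrite capmxC -(capmx_compl S); apply: capmxS (submx_refl _) _.
  by rewrite eq_row_base.
rewrite addsmxC; apply: (submx_trans (_ : 1%:M <= S + S^C)%MS).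
  by rewrite sub1mx addsmx_compl_full.
by apply: addsmxS (submx_refl _) _; rewrite eq_row_base.
Qed.

Lemma compl_basis_eqmx (n : nat -> nat) k m t (A : 'M[C]_(m, n k)) (S : 'M[C]_(n k))
  (T : 'M[C]_(t, n k)) :
  (S :=: T)%MS -> compl_basis A S ->
  [/\ row_free A, (A :&: T <= (0 : 'M_(n k)))%MS & (1%:M <= A + T)%MS].
Proof.
move=> eqST [free_A cap0 full].
by rewrite -(cap_eqmx (eqmx_refl A) eqST) -(adds_eqmx (eqmx_refl A) eqST).
Qed.

Lemma sgnzS (p : int) k : sgnz (p + k.+1%:Z) = - sgnz (p + k%:Z).
Proof.
have -> : p + k.+1%:Z = (p + k%:Z) + 1 by rewrite -addrA -PoszD addn1.
by rewrite /sgnz exprzDr ?unitrN1 // expr1z mulrN1.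
Qed.

Lemma prod_ord_telescope (F : fieldType) N (f : nat -> F) :
  (forall k, f k != 0) -> \prod_(k < N.+1) (f k / f k.+1) = f 0%N / f N.+1.
Proof.
move=> f_neq0; rewrite -(big_mkord xpredT (fun k => f k / f k.+1)).
by rewrite telescope_prodr // => k _; rewrite unitfE.
Qed.

Section Complex.
Variable n : nat -> nat.
Variable d : forall k, 'M[C]_(n k, n k.+1).
Variable delta : forall k, 'M[C]_(n k.+1, n k).
Hypothesis hd2 : forall k, d k *m d k.+1 = 0.
Hypothesis hdelta2 : forall k, delta k.+1 *m delta k = 0.
Hypothesis hinv : forall k, bracket d delta k \in unitmx.

Local Notation L := (bracket d delta).

Definition nprev k := if k is j.+1 then n j else 0%N.
Definition dprev k : 'M[C]_(nprev k, n k) :=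
  match k with 0 => 0 | j.+1 => d j end.
Definition deltaprev k : 'M[C]_(n k, nprev k) :=
  match k with 0 => 0 | j.+1 => delta j end.

Lemma bracketE k : L k = d k *m delta k + deltaprev k *m dprev k.
Proof. by case: k => [|k] //=; rewrite mul0mx addr0. Qed.

Lemma dprev_d k : dprev k *m d k = 0.
Proof. by case: k => [|k] /=; [rewrite mul0mx | apply: hd2]. Qed.

Lemma delta_deltaprev k : delta k *m deltaprev k = 0.
Proof. by case: k => [|k] /=; [rewrite mulmx0 | apply: hdelta2]. Qed.

Lemma bracket_d k : L k *m d k = d k *m L k.+1.
Proof.
rewrite !bracketE /= mulmxDl mulmxDr !mulmxA hd2 mul0mx add0r.
by rewrite -(mulmxA (deltaprev k)) dprev_d mulmx0 addr0.
Qed.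

Lemma bracket_delta k : L k.+1 *m delta k = delta k *m L k.
Proof.
rewrite !bracketE /= mulmxDl mulmxDr !mulmxA -(mulmxA (d k.+1)) hdelta2 mulmx0 add0r.
by rewrite -(mulmxA (delta k)) delta_deltaprev mul0mx addr0.
Qed.

Lemma dprev_delta_full k : (1%:M <= dprev k + delta k)%MS.
Proof.
have -> : 1%:M = (invmx (L k) *m deltaprev k) *m dprev k + (invmx (L k) *m d k) *m delta k.
  by rewrite -!mulmxA -mulmxDr addrC -bracketE mulVmx.
by apply: addmx_sub_adds; apply: submxMl.
Qed.

Lemma dprev_delta_cap k : (dprev k :&: delta k <= (0 : 'M_(n k)))%MS.
Proof.
rewrite submx0; set v := (dprev k :&: delta k)%MS.
have /submxP [x vx] : (v <= dprev k)%MS by apply: capmxSl.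
have /submxP [y vy] : (v <= delta k)%MS by apply: capmxSr.
have vL0 : v *m L k = 0.
  rewrite bracketE mulmxDr !mulmxA {1}vx {1}vy -(mulmxA x) dprev_d -(mulmxA y).
  by rewrite delta_deltaprev !mulmx0 !mul0mx addr0.
by rewrite -(mulmxK (hinv k) v) vL0 mul0mx.
Qed.

Lemma ker_d k s (v : 'M[C]_(s, n k)) : v *m d k = 0 -> (v <= dprev k)%MS.
Proof.
move=> vd0; set w := v *m invmx (L k).
have wd0 : w *m d k = 0.
  apply: (can_inj (mulmxK (hinv k.+1))).
  by rewrite -mulmxA -bracket_d mulmxA mulmxKV ?hinv // vd0 !mul0mx.
rewrite -(mulmxKV (hinv k) v) -/w bracketE mulmxDr !mulmxA wd0 mul0mx add0r.
exact: submxMl.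
Qed.

Lemma ker_delta k s (v : 'M[C]_(s, n k.+1)) : v *m delta k = 0 -> (v <= delta k.+1)%MS.
Proof.
move=> vdelta0; set w := v *m invmx (L k.+1).
have wdelta0 : w *m delta k = 0.
  apply: (can_inj (mulmxK (hinv k))).
  by rewrite -mulmxA -bracket_delta mulmxA mulmxKV ?hinv // vdelta0 !mul0mx.
rewrite -(mulmxKV (hinv k.+1) v) -/w bracketE mulmxDr !mulmxA /= wdelta0 mul0mx addr0.
exact: submxMl.
Qed.

Lemma imdE k : (imd d k :=: dprev k)%MS.
Proof. by case: k => [|k] /=; [exact: eqmx_sym (eqmx0 _ _ _) | exact: genmxE]. Qed.

Variables (m m' : nat -> nat).
Variable c : forall k, 'M[C]_(m k, n k).
Variable r : forall k, 'M[C]_(m' k, n k).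
Hypothesis hc : forall k, compl_basis (c k) (imd d k).
Hypothesis hr : forall k, compl_basis (r k) (imdelta delta k).

Lemma c_compl k :
  [/\ row_free (c k), (c k :&: dprev k <= (0 : 'M_(n k)))%MS & (1%:M <= c k + dprev k)%MS].
Proof. exact: compl_basis_eqmx (imdE k) (hc k). Qed.

Lemma r_compl k :
  [/\ row_free (r k), (r k :&: delta k <= (0 : 'M_(n k)))%MS & (1%:M <= r k + delta k)%MS].
Proof. exact: compl_basis_eqmx (genmxE _) (hr k). Qed.

(* The bases d sigma^{k-1} of dE^{k-1} and delta rho^{k+1} of delta E^{k+1}. *)
Definition mprev k := if k is j.+1 then m j else 0%N.
Definition cd k : 'M[C]_(mprev k, n k) :=
  match k with 0 => 0 | j.+1 => c j *m d j end.
Definition rd k : 'M[C]_(m' k.+1, n k) := r k.+1 *m delta k.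

Lemma cd_basis k : row_free (cd k) /\ (dprev k <= cd k)%MS.
Proof.
case: k => [|k]; first by rewrite /row_free mxrank0 sub0mx.
case: (c_compl k) => free_c cap0 full.
exact: compl_mulmx_basis free_c cap0 full (dprev_d k) (@ker_d k).
Qed.

Lemma rd_basis k : row_free (rd k) /\ (delta k <= rd k)%MS.
Proof.
case: (r_compl k.+1) => free_r cap0 full.
exact: compl_mulmx_basis free_r cap0 full (hdelta2 k) (@ker_delta k).
Qed.

Lemma cd_sub k : (cd k <= dprev k)%MS.
Proof. by case: k => [|k]; [rewrite sub0mx | exact: submxMl]. Qed.

Lemma cd_rd_full k : (1%:M <= cd k + rd k)%MS.
Proof.
apply: submx_trans (dprev_delta_full k) _.
exact: addsmxS (cd_basis k).2 (rd_basis k).2.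
Qed.

Lemma c_cd_full k : (1%:M <= c k + cd k)%MS.
Proof.
case: (c_compl k) => _ _ full; apply: submx_trans full _.
exact: addsmxS (submx_refl _) (cd_basis k).2.
Qed.

Definition omega k := sqdet (col_mx (cd k) (rd k)).

Lemma tau_d_factorE k : tau_d_factor d c k = sqdet (col_mx (cd k) (c k)).
Proof. by case: k => [|k] //=; rewrite sqdet_col_mx0. Qed.

Lemma omega_neq0 k : omega k != 0.
Proof.
case: (cd_basis k) (rd_basis k) => free_cd _ [free_rd _].
apply: sqdet_col_mx_neq0 free_cd free_rd _ (cd_rd_full k).
apply: submx_trans (dprev_delta_cap k).
exact: capmxS (cd_sub k) (submxMl _ _).
Qed.

Lemma tau_d_factor_neq0 k : tau_d_factor d c k != 0.
Proof.
case: (c_compl k) (cd_basis k) => free_c cap0 _ [free_cd _].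
rewrite tau_d_factorE; apply: sqdet_col_mx_neq0 free_cd free_c _ _.
  by rewrite capmxC; apply: submx_trans cap0; exact: capmxS (submx_refl _) (cd_sub k).
by rewrite addsmxC; exact: c_cd_full.
Qed.

Lemma tau_delta_factor_neq0 k : tau_delta_factor delta r k != 0.
Proof.
case: (r_compl k) (rd_basis k) => free_r cap0 full [free_rd delta_rd].
apply: sqdet_col_mx_neq0 free_r free_rd _ _.
  by apply: submx_trans cap0; exact: capmxS (submx_refl _) (submxMl _ _).
by apply: submx_trans full _; exact: addsmxS (submx_refl _) delta_rd.
Qed.

Definition beta k := tau_d_factor d c k / omega k.
Definition alpha k := tau_delta_factor delta r k / omega k.

Lemma beta_neq0 k : beta k != 0.
Proof. by rewrite mulf_neq0 ?invr_eq0 ?tau_d_factor_neq0 ?omega_neq0. Qed.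

Lemma alpha_neq0 k : alpha k != 0.
Proof. by rewrite mulf_neq0 ?invr_eq0 ?tau_delta_factor_neq0 ?omega_neq0. Qed.

Lemma beta_coord k U B : c k = U *m cd k + B *m rd k -> sqdet B = beta k.
Proof.
by move=> ec; rewrite /beta tau_d_factorE ec sqdet_col_mx_dcoord ?mulfK ?omega_neq0.
Qed.

Lemma alpha_coord k A V : r k = A *m cd k + V *m rd k -> sqdet A = alpha k.
Proof.
move=> er; rewrite /alpha /tau_delta_factor -/(rd k) er.
by rewrite sqdet_col_mx_ucoord ?mulfK ?omega_neq0.
Qed.

(* Modulo dE^{k-1}, sigma^k is B (delta rho^{k+1}) = B A (delta d sigma^k) = B A P sigma^k. *)
Lemma dd_coord_inv k U B A V P Q :
  c k = U *m cd k + B *m rd k -> r k.+1 = A *m cd k.+1 + V *m rd k.+1 ->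
  c k *m d k *m delta k = P *m c k + Q *m cd k -> B *m A *m P = 1%:M.
Proof.
move=> ec er eP.
have rdE : rd k = A *m (P *m c k + Q *m cd k).
  rewrite -eP /rd er mulmxDl /rd -(mulmxA V) -(mulmxA (r k.+2)) hdelta2.
  by rewrite !mulmx0 addr0 /= !mulmxA.
have e1 : (1%:M - B *m A *m P) *m c k = (U + B *m A *m Q) *m cd k.
  rewrite mulmxBl mul1mx {1}ec rdE !mulmxDr !mulmxDl !mulmxA.
  by rewrite addrCA [LHS]addrC addKr.
case: (c_compl k) => free_c cap0 _.
have : ((1%:M - B *m A *m P) *m c k <= (0 : 'M_(n k)))%MS.
  apply: submx_trans cap0; rewrite sub_capmx submxMl e1.
  exact: submx_trans (submxMl _ _) (cd_sub k).
rewrite submx0 => /eqP e0; apply/esym/subr0_eq/(row_free_inj free_c).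
by rewrite e0 mul0mx.
Qed.

(* rho k is the determinant of [d, delta] on dE^{k-1}. *)
Definition rho k := if k is j.+1 then (beta j * alpha k)^-1 else 1.

Lemma det_dd_coord k P Q :
  c k *m d k *m delta k = P *m c k + Q *m cd k -> \det P = rho k.+1.
Proof.
move=> eP.
case: (coord_addsmx (c k) (cd_rd_full k)) => U [B ec].
case: (coord_addsmx (r k.+1) (cd_rd_full k.+1)) => A [V er].
have BAP1 := dd_coord_inv ec er eP.
have mm' : m k = m' k.+1.
  by apply: (@sqdet_neq0_square _ _ B); rewrite (beta_coord ec) beta_neq0.
have := congr1 (fun M => \det M) BAP1.
rewrite det1 det_mulmx -(sqdetE (B *m A)) sqdet_mulmx; last by left.
rewrite (beta_coord ec) (alpha_coord er) => e1.
have ba_neq0 := mulf_neq0 (beta_neq0 k) (alpha_neq0 k.+1).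
by apply: (mulfI ba_neq0); rewrite e1 /rho mulfV.
Qed.

Lemma bracket_c k : exists G P, c k *m L k = G *m cd k + P *m c k /\ \det P = rho k.+1.
Proof.
case: (coord_addsmx (c k *m d k *m delta k) (c_cd_full k)) => P [Q eP].
have : (c k *m deltaprev k *m dprev k <= cd k)%MS.
  by apply: submx_trans (submxMl _ _) (cd_basis k).2.
case/submxP => G eG; exists (Q + G), P; split; last exact: det_dd_coord eP.
by rewrite bracketE mulmxDr !mulmxA eP eG mulmxDl -addrA addrC.
Qed.

Lemma cd_d k : cd k *m d k = 0.
Proof. by case: k => [|k] /=; rewrite ?mul0mx // -mulmxA hd2 mulmx0. Qed.

Lemma bracket_cd k : exists P, cd k *m L k = P *m cd k /\ \det P = rho k.
Proof.
case: k => [|k]; first by exists 0; rewrite det_mx00 !flatmx0.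
case: (bracket_c k) => G [P [eL detP]]; exists P; split=> //=.
by rewrite -mulmxA -bracket_d mulmxA eL mulmxDl -mulmxA cd_d mulmx0 add0r mulmxA.
Qed.

Lemma det_bracket k : \det (L k) = rho k * rho k.+1.
Proof.
case: (bracket_cd k) => P1 [eL1 <-]; case: (bracket_c k) => G [P2 [eL2 <-]].
apply: det_block_triangular eL1 eL2.
by rewrite -tau_d_factorE tau_d_factor_neq0.
Qed.

Lemma alpha0 : alpha 0 = 1.
Proof.
case: (coord_addsmx (r 0) (cd_rd_full 0)) => A [V er].
rewrite -(alpha_coord er) sqdet_empty //.
by apply: (@sqdet_neq0_square _ _ A); rewrite (alpha_coord er) alpha_neq0.
Qed.

Lemma rho_neq0 k : rho k != 0.
Proof.
by case: k => [|k]; [exact: oner_neq0 | rewrite invr_eq0 mulf_neq0 ?beta_neq0 ?alpha_neq0].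
Qed.

Variable p : int.
Local Notation s k := (sgnz (p + k%:Z)).

Lemma exprz_sgnzS (x : C) k : x ^ s k.+1 = (x ^ s k)^-1.
Proof. by rewrite sgnzS invr_expz. Qed.

Lemma det_bracket_sgnz k : \det (L k) ^ s k = rho k ^ s k / rho k.+1 ^ s k.+1.
Proof. by rewrite det_bracket expfzMl exprz_sgnzS invrK. Qed.

Lemma det_bracket_sgnz_deg k :
  \det (L k) ^ (s k * (p + k%:Z))
  = (rho k ^ s k) ^ (p + k%:Z) / (rho k.+1 ^ s k.+1) ^ (p + k.+1%:Z) * rho k.+1 ^ s k.+1.
Proof.
rewrite -exprz_exp det_bracket_sgnz expfzMl exprz_inv -invr_expz.
set y := rho k.+1 ^ s k.+1; have y_neq0 : y != 0 by rewrite expfz_neq0 ?rho_neq0.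
have -> : y ^ (p + k.+1%:Z) = y ^ (p + k%:Z) * y.
  by rewrite -addn1 PoszD addrA expfzDr // expr1z.
by rewrite invfM mulrA divfK.
Qed.

Lemma tau_factor_sgnz k :
  (tau_d_factor d c k / tau_delta_factor delta r k) ^ s k
  = (alpha k ^ s k)^-1 / (alpha k.+1 ^ s k.+1)^-1 * rho k.+1 ^ s k.+1.
Proof.
have -> : tau_d_factor d c k / tau_delta_factor delta r k = beta k / alpha k.
  by rewrite /beta /alpha invfM invrK mulrACA mulVf ?mulr1 ?omega_neq0.
have -> : beta k = (alpha k.+1)^-1 * (rho k.+1)^-1.
  by rewrite /= invrK mulrC mulfK ?alpha_neq0.
rewrite invrK !(exprz_sgnzS (alpha k.+1), exprz_sgnzS (rho k.+1)).
rewrite expfzMl (expfzMl (alpha k.+1)^-1) !exprz_inv -!invr_expz.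
by rewrite mulrC mulrA.
Qed.

Section Bounded.
Variable N : nat.
Hypothesis hn : forall k, (N < k)%N -> n k = 0%N.

Lemma row_free_top k t (A : 'M[C]_(t, n k)) : row_free A -> (N < k)%N -> t = 0%N.
Proof.
move=> + Nk; rewrite -row_leq_rank => /leq_trans/(_ (rank_leq_col A)).
by rewrite hn // leqn0 => /eqP.
Qed.

Lemma m_top : m N = 0%N.
Proof. exact: row_free_top (cd_basis N.+1).1 _. Qed.

Lemma m'_top : m' N.+1 = 0%N.
Proof. by case: (r_compl N.+1) => free_r _ _; exact: row_free_top free_r _. Qed.

Lemma alpha_top : alpha N.+1 = 1.
Proof.
case: (coord_addsmx (r N.+1) (cd_rd_full N.+1)) => A [V er].
by rewrite -(alpha_coord er) sqdet_empty //; [exact: m'_top | exact: m_top].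
Qed.

Lemma rho_top : rho N.+1 = 1.
Proof.
case: (coord_addsmx (c N) (cd_rd_full N)) => U [B ec].
by rewrite /= alpha_top mulr1 -(beta_coord ec) sqdet_empty ?invr1 //;
  [exact: m_top | exact: m'_top].
Qed.

Lemma prod_det_bracket_sgnz : \prod_(k < N.+1) \det (L k) ^ s k = 1.
Proof.
under eq_bigr do rewrite det_bracket_sgnz.
rewrite (@prod_ord_telescope _ _ (fun k => rho k ^ s k)).
  by rewrite rho_top /= !exp1rz divr1.
by move=> k; rewrite expfz_neq0 ?rho_neq0.
Qed.

Lemma tau_ratio :
  tau_d d p N c / tau_delta delta p N r
  = \prod_(k < N.+1) \det (L k) ^ (s k * (p + k%:Z)).
Proof.
rewrite /tau_d /tau_delta -prodf_div.
under eq_bigr do rewrite invr_expz -exprz_inv -expfzMl tau_factor_sgnz.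
rewrite big_split (@prod_ord_telescope _ _ (fun k => (alpha k ^ s k)^-1)); last first.
  by move=> k; rewrite invr_eq0 expfz_neq0 ?alpha_neq0.
under [RHS]eq_bigr do rewrite det_bracket_sgnz_deg.
rewrite big_split (@prod_ord_telescope _ _ (fun k => (rho k ^ s k) ^ (p + k%:Z))); last first.
  by move=> k; rewrite !expfz_neq0 ?rho_neq0.
by rewrite alpha0 alpha_top rho_top /= !exp1rz invr1 divr1 !mul1r.
Qed.

End Bounded.
End Complex.

Unset Implicit Arguments.
Theorem mainTheorem16 (p : int) (N : nat) (n : nat -> nat)
  (d : forall k, 'M[C]_(n k, n k.+1)) (delta : forall k, 'M[C]_(n k.+1, n k))
  (hn : forall k, (N < k)%N -> n k = 0%N)
  (hd2 : forall k, d k *m d k.+1 = 0)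
  (hdelta2 : forall k, delta k.+1 *m delta k = 0)
  (hinv : forall k, bracket d delta k \in unitmx) :
  [/\ \prod_(k < N.+1) (\det (bracket d delta k)) ^ sgnz (p + k%:Z) = 1,
      forall (m m' : nat -> nat) (c : forall k, 'M[C]_(m k, n k))
             (r : forall k, 'M[C]_(m' k, n k)),
        (forall k, compl_basis (c k) (imd d k)) ->
        (forall k, compl_basis (r k) (imdelta delta k)) ->
        tau_d d p N c / tau_delta delta p N r
        = \prod_(k < N.+1)
            (\det (bracket d delta k)) ^ (sgnz (p + k%:Z) * (p + k%:Z))
    & (forall k, bracket d delta k = 1%:M) ->
      forall (m m' : nat -> nat) (c : forall k, 'M[C]_(m k, n k))
             (r : forall k, 'M[C]_(m' k, n k)),
        (forall k, compl_basis (c k) (imd d k)) ->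
        (forall k, compl_basis (r k) (imdelta delta k)) ->
        tau_d d p N c = tau_delta delta p N r].
Proof.
split.
- have hc k := compl_exists (imd d k); have hr k := compl_exists (imdelta delta k).
  apply: (prod_det_bracket_sgnz hd2 hdelta2 hinv hc hr p hn).
- move=> m m' c r hc hr; apply: (tau_ratio hd2 hdelta2 hinv hc hr p hn).
- move=> bracket1 m m' c r hc hr; apply: divr1_eq.
  rewrite (tau_ratio hd2 hdelta2 hinv hc hr p hn).
  by apply: big1 => k _; rewrite bracket1 det1 exp1rz.
Qed.
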